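(* Let $\alpha,\lambda>0$ and $\beta_1,\beta_2,\beta_3>0$. Let $W_1,W_2,W_3$ be independent continuous random variables with $P(W_i\le w)=(1-e^{-\lambda w^{\alpha}})^{\beta_i}$ for $w>0$, and let $(Z_1,Z_2)=(\max\{W_1,W_3\},\max\{W_2,W_3\})$ (the bivariate continuous exponentiated Weibull distribution with parameters $\alpha,\lambda,\beta_1,\beta_2,\beta_3$). Set $X_i=[Z_i]$, $i=1,2$, where $[z]$ is the largest integer $\le z$, and $p=e^{-\lambda}$. Then $(X_1,X_2)\sim BDEW(\alpha,p,\beta_1,\beta_2,\beta_3)$.
   Context: The exponentiated discrete Weibull distribution $EDW(\alpha,p,\beta)$ ($\alpha,\beta>0$, $0<p<1$) is the distribution on $\mathbb{N}_0=\{0,1,2,\dots\}$ with cumulative distribution function $F_{EDW}(x;\alpha,p,\beta)=[1-p^{([x]+1)^{\alpha}}]^{\beta}$ for real $x\ge 0$. The bivariate discrete exponentiated Weibull distribution $BDEW(\alpha,p,\beta_1,\beta_2,\beta_3)$ is the distribution of $(\max\{V_1,V_3\},\max\{V_2,V_3\})$ where $V_1,V_2,V_3$ are independent with $V_i\sim EDW(\alpha,p,\beta_i)$; equivalently it has joint CDF $F(x_1,x_2)=[1-p^{(x_1+1)^{\alpha}}]^{\beta_1}[1-p^{(x_2+1)^{\alpha}}]^{\beta_2}[1-p^{(\min\{x_1,x_2\}+1)^{\alpha}}]^{\beta_3}$ for $x_1,x_2\in\mathbb{N}_0$. *)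

From HB Require Import structures.
From mathcomp Require Import all_boot all_order all_algebra.
From mathcomp Require Import all_classical all_reals all_analysis.
Set Implicit Arguments. Unset Strict Implicit. Unset Printing Implicit Defensive.
Import Order.TTheory GRing.Theory Num.Theory.
Local Open Scope classical_set_scope.
Local Open Scope ring_scope.

(* Mutual independence of three real random variables: the product rule for
   all triples of Borel sets (taking some sets to be setT covers subfamilies). *)
Definition indep3 {d} {T : measurableType d} {R : realType}
  (P : probability T R) (X1 X2 X3 : {RV P >-> R}) : Prop :=
  forall A1 A2 A3 : set R, measurable A1 -> measurable A2 -> measurable A3 ->
    P (X1 @^-1` A1 `&` X2 @^-1` A2 `&` X3 @^-1` A3) =
    (P (X1 @^-1` A1) * P (X2 @^-1` A2) * P (X3 @^-1` A3))%E.

Definition EW_cdf {R : realType} (alpha lambda beta w : R) : R :=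
  (1 - expR (- (lambda * w `^ alpha))) `^ beta.

Definition BDEW_cdf {R : realType} (alpha p b1 b2 b3 : R) (x1 x2 : nat) : R :=
  (1 - p `^ ((x1.+1)%:R `^ alpha)) `^ b1 *
  (1 - p `^ ((x2.+1)%:R `^ alpha)) `^ b2 *
  (1 - p `^ ((minn x1 x2).+1%:R `^ alpha)) `^ b3.
Arguments indep3 {d T R} P X1 X2 X3.

(** For a natural number [x], [[z] <= x] iff [z < x + 1]; hence
    [{X1 <= x1, X2 <= x2}] is the event [{W1 < x1 + 1, W2 < x2 + 1,
    W3 < min(x1, x2) + 1}].  Independence factors its probability, the absence
    of atoms turns each factor into a value of the CDF of [W_i] at an integer,
    and [exp(-lambda n^alpha) = p ^ (n^alpha)].  The support condition holds
    because [W3 >= 0] almost surely, its CDF vanishing as [w -> 0+]. *)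

From HB Require Import structures.
From mathcomp Require Import all_boot all_order all_algebra.
From mathcomp Require Import all_classical all_reals all_analysis.
From mathcomp Require Import measurable_realfun.
Set Implicit Arguments. Unset Strict Implicit. Unset Printing Implicit Defensive.
Import Order.TTheory GRing.Theory Num.Theory.
Local Open Scope classical_set_scope.
Local Open Scope ring_scope.

Lemma floor_le_natE (R : realType) (y : R) (n : nat) :
  (Num.floor y <= n%:Z) = (y < n.+1%:R).
Proof. by rewrite -[n.+1%:R]/(n.+1%:Z%:~R) -floor_lt_int -addn1 PoszD ltzD1. Qed.

Lemma floor_max_le_natP (R : realType) (a b c : R) (x1 x2 : nat) :
  Num.floor (Num.max a c) <= x1%:Z /\ Num.floor (Num.max b c) <= x2%:Z <->
  (a < x1.+1%:R /\ b < x2.+1%:R) /\ c < (minn x1 x2).+1%:R.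
Proof.
rewrite !floor_le_natE !gt_max; split.
  by move=> [/andP[ha hc1] /andP[hb hc2]]; split=> //; case: leqP.
move=> [[ha hb] hc]; rewrite ha hb; split.
  by apply: lt_le_trans hc _; rewrite ler_nat ltnS geq_minl.
by apply: lt_le_trans hc _; rewrite ler_nat ltnS geq_minr.
Qed.

Lemma EW_cdfE (R : realType) (alpha lambda beta w : R) :
  EW_cdf alpha lambda beta w = (1 - expR (- lambda) `^ (w `^ alpha)) `^ beta.
Proof. by rewrite /EW_cdf -expRM mulNr. Qed.

Lemma EW_cdf_le (R : realType) (alpha lambda beta w : R) :
  0 <= lambda -> 0 <= beta ->
  EW_cdf alpha lambda beta w <= (lambda * w `^ alpha) `^ beta.
Proof.
move=> l0 b0; apply: ge0_ler_powR => //.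
- by rewrite nnegrE subr_ge0 expR_le1 oppr_le0 mulr_ge0 ?powR_ge0.
- by rewrite nnegrE mulr_ge0 ?powR_ge0.
- by rewrite lerBlDr -lerBlDl expR_ge1Dx.
Qed.

Lemma EW_cdf_vanishing (R : realType) (alpha lambda beta e : R) :
  0 < alpha -> 0 < lambda -> 0 < beta -> 0 < e ->
  exists2 w, 0 < w & EW_cdf alpha lambda beta w <= e.
Proof.
move=> a0 l0 b0 e0.
have e_root_gt0 : 0 < e `^ beta^-1 by rewrite powR_gt0.
have scale_gt0 : 0 < e `^ beta^-1 / lambda by rewrite divr_gt0.
exists ((e `^ beta^-1 / lambda) `^ alpha^-1); first by rewrite powR_gt0.
apply: le_trans (EW_cdf_le alpha _ (ltW l0) (ltW b0)) _.
rewrite -powRrM mulVf ?gt_eqF // powRr1 ?(ltW scale_gt0) // mulrC divfK ?gt_eqF //.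
by rewrite -powRrM mulVf ?gt_eqF // powRr1 ?(ltW e0).
Qed.

Section real_random_variable_events.
Context {d : measure_display} {T : measurableType d} (R : realType).
Variable P : probability T R.

Lemma set_RV_ltE (X : {RV P >-> R}) (a : R) :
  [set t | X t < a] = X @^-1` [set` `]-oo, a[].
Proof. by apply/seteqP; split=> t /=; rewrite in_itv. Qed.

Lemma measurable_fun_ge (f : T -> R) (a : R) :
  measurable_fun setT f -> measurable [set t | a <= f t].
Proof.
by move=> mf; rewrite -[X in measurable X]setTI; apply: measurable_fun_le.
Qed.

Lemma measurable_RV_lt (X : {RV P >-> R}) (a : R) : measurable [set t | X t < a].
Proof. by rewrite set_RV_ltE; apply: measurable_funPTI; apply: measurable_itv. Qed.

Lemma probability_RV_ge (X : {RV P >-> R}) (a : R) :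
  P [set t | a <= X t] = (1 - P [set t | (X t < a)%R])%E.
Proof.
rewrite -probability_setC; last exact: measurable_RV_lt.
by congr (P _); apply/seteqP; split=> t /=; rewrite leNgt => /negP.
Qed.

Lemma probability_RV_lt_noatom (X : {RV P >-> R}) (a : R) :
  P (X @^-1` [set a]) = 0%E -> P [set t | X t < a] = P [set t | X t <= a].
Proof.
move=> atom0; have -> : [set t | X t <= a] = [set t | X t < a] `|` X @^-1` [set a].
  apply/seteqP; split=> t /=; rewrite le_eqVlt.
    by case/orP=> [/eqP|]; [right|left].
  by case=> [->|->]; rewrite ?eqxx ?orbT.
by rewrite measureU0 //; exact: measurable_RV_lt.
Qed.

Lemma probability_RV_lt0_eq0 (X : {RV P >-> R}) :
  (forall e : R, 0 < e -> exists2 w : R, 0 < w & (P [set t | (X t <= w)%R] <= e%:E)%E) ->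
  P [set t | X t < 0] = 0%E.
Proof.
move=> small_cdf; apply/le_anti; rewrite measure_ge0 andbT.
apply/lee_addgt0Pr => e /small_cdf[w w0 hw]; rewrite add0e.
apply: le_trans hw; apply: le_measure; rewrite ?inE; first exact: measurable_RV_lt.
  rewrite (_ : [set t | _] = X @^-1` [set` `]-oo, w]]).
    by apply: measurable_funPTI; apply: measurable_itv.
  by apply/seteqP; split=> t /=; rewrite in_itv.
by move=> t /= /ltW /le_trans; apply; apply: ltW.
Qed.

End real_random_variable_events.

Theorem mainTheorem3 (d : measure_display) (T : measurableType d) (R : realType)
  (P : probability T R) (alpha lambda b1 b2 b3 : R)
  (W1 W2 W3 : {RV P >-> R}) :
  0 < alpha -> 0 < lambda -> 0 < b1 -> 0 < b2 -> 0 < b3 ->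
  indep3 P W1 W2 W3 ->
  (* continuity of W1, W2, W3 *)
  (forall w : R, P (W1 @^-1` [set w]) = 0%E) ->
  (forall w : R, P (W2 @^-1` [set w]) = 0%E) ->
  (forall w : R, P (W3 @^-1` [set w]) = 0%E) ->
  (forall w : R, 0 < w -> P [set t | W1 t <= w] = (EW_cdf alpha lambda b1 w)%:E) ->
  (forall w : R, 0 < w -> P [set t | W2 t <= w] = (EW_cdf alpha lambda b2 w)%:E) ->
  (forall w : R, 0 < w -> P [set t | W3 t <= w] = (EW_cdf alpha lambda b3 w)%:E) ->
  let Z1 := fun t => Num.max (W1 t) (W3 t) in
  let Z2 := fun t => Num.max (W2 t) (W3 t) in
  let X1 := fun t => Num.floor (Z1 t) in
  let X2 := fun t => Num.floor (Z2 t) in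
  let p := expR (- lambda) in
  (* (X1, X2) is N0 x N0-valued almost surely ... *)
  P [set t | (0 <= X1 t)%R /\ (0 <= X2 t)%R] = 1%E /\
  (* ... with the BDEW(alpha, p, b1, b2, b3) joint CDF *)
  (forall x1 x2 : nat,
     P [set t | (X1 t <= x1%:Z)%R /\ (X2 t <= x2%:Z)%R] =
     (BDEW_cdf alpha p b1 b2 b3 x1 x2)%:E).
Proof.
move=> a0 l0 b10 b20 b30 indepW atom1 atom2 atom3 F1 F2 F3 Z1 Z2 X1 X2 p.
split.
  have W3_ge0 : P [set t | 0 <= W3 t] = 1%E.
    rewrite probability_RV_ge probability_RV_lt0_eq0 ?sube0 // => e e0.
    by have [w w0 hw] := EW_cdf_vanishing a0 l0 b30 e0; exists w; rewrite ?F3.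
  have support_mx : measurable [set t | 0 <= X1 t /\ 0 <= X2 t].
    rewrite (_ : [set t | _] =
        [set t | 0 <= (W1 \max W3) t] `&` [set t | 0 <= (W2 \max W3) t]).
      by apply: measurableI; apply/measurable_fun_ge/measurable_maxr.
    by apply/seteqP; split=> t /=; rewrite !floor_ge0.
  apply/le_anti; rewrite probability_le1 //= -W3_ge0.
  apply: le_measure; rewrite ?inE //; first exact: measurable_fun_ge.
  by move=> t /= W3t_ge0; rewrite /X1 /X2 /Z1 /Z2 !floor_ge0 !le_max W3t_ge0 !orbT.
move=> x1 x2.
have -> : [set t | X1 t <= x1%:Z /\ X2 t <= x2%:Z] =
    [set t | W1 t < x1.+1%:R] `&` [set t | W2 t < x2.+1%:R] `&`
    [set t | W3 t < (minn x1 x2).+1%:R].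
  by apply/seteqP; split=> t /floor_max_le_natP.
rewrite !set_RV_ltE indepW ?measurable_itv // -!set_RV_ltE.
rewrite !probability_RV_lt_noatom // F1 ?F2 ?F3 ?ltr0Sn //.
by rewrite /BDEW_cdf /p -!EW_cdfE.
Qed.
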